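(* For every group $G$, $S(G) = \bigcap_{N \lhd G,\ |G:N|<\infty} F_N(G)$.
   Context: $S(G) := \{ x \in G : x^{|G:H|} \in H \text{ for every subgroup } H \leqslant G \text{ of finite index}\}$. For a group $X$, the Fitting subgroup $F(X)$ is the subgroup generated by all nilpotent normal subgroups of $X$. For $N \lhd G$, $F_N(G)$ denotes the preimage of $F(G/N)$ under the projection $G \to G/N$. *)

(* abstract (possibly infinite) groups via mathcomp's
   [groupType] from boot/monoid.v; subsets of a group are Prop-valued
   predicates [G -> Prop]. *)
From HB Require Import structures.
From mathcomp Require Import all_boot.
From mathcomp Require Import monoid.

Set Implicit Arguments.
Unset Strict Implicit.
Unset Printing Implicit Defensive.

Local Open Scope group_scope.

Section GroupDefs.
Variable G : groupType.

Definition is_subgroup (H : G -> Prop) : Prop :=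
  [/\ H 1, (forall x y, H x -> H y -> H (x * y)) & (forall x, H x -> H x^-1)].

Definition is_normal (N : G -> Prop) : Prop :=
  is_subgroup N /\ (forall x g, N x -> N (x ^ g)).

(* |G : H| = n : there are exactly n left cosets of H, i.e. a left
   transversal s of length n (every x lies in some coset s_i H, and the
   cosets s_i H are pairwise distinct). *)
Definition index_eq (H : G -> Prop) (n : nat) : Prop :=
  exists s : seq G,
    [/\ size s = n,
        (forall x, exists2 i, i < n & H ((nth 1 s i)^-1 * x)) &
        (forall i j, i < n -> j < n ->
           H ((nth 1 s i)^-1 * nth 1 s j) -> i = j)].

Definition finite_index (H : G -> Prop) : Prop := exists n, index_eq H n.

Definition S_set : G -> Prop :=
  fun x => forall (H : G -> Prop) (n : nat),
    is_subgroup H -> index_eq H n -> H (x ^+ n).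

Definition gen (A : G -> Prop) : G -> Prop :=
  fun x => forall K : G -> Prop, is_subgroup K -> (forall y, A y -> K y) -> K x.

Definition commgrp (A B : G -> Prop) : G -> Prop :=
  gen (fun z => exists x y, [/\ A x, B y & z = [~ x, y]]).

(* lower central series of K: gamma_1 = K (index 0), gamma_{i+1} = [gamma_i, K] *)
Fixpoint lcs (K : G -> Prop) (n : nat) : G -> Prop :=
  match n with
  | 0 => K
  | n'.+1 => commgrp (lcs K n') K
  end.

Definition is_nilpotent (K : G -> Prop) : Prop :=
  is_subgroup K /\ exists n, forall x, lcs K n x -> x = 1.

Definition Fitting : G -> Prop :=
  gen (fun x => exists K : G -> Prop, [/\ is_normal K, is_nilpotent K & K x]).

End GroupDefs.

Definition is_hom (G Q : groupType) (f : G -> Q) : Prop :=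
  forall x y, f (x * y) = f x * f y.

(* F_N(G): the preimage of F(G/N) under the projection G -> G/N.  The
   quotient G/N is represented by any group Q together with a surjective
   homomorphism f : G -> Q whose kernel is exactly N (Q is then G/N up to
   isomorphism, and the preimage f^-1(F(Q)) does not depend on the choice
   of (Q, f)); x \in F_N(G) iff f x \in F(Q) for every such realization. *)
Definition F_N (G : groupType) (N : G -> Prop) : G -> Prop :=
  fun x => forall (Q : groupType) (f : G -> Q),
    is_hom f -> (forall y, exists z, f z = y) ->
    (forall z, f z = 1 <-> N z) ->
    @Fitting Q (f x).

From Pilot Require Import Defs.
From HB Require Import structures.
From mathcomp Require Import all_boot.
From mathcomp Require Import monoid.
From mathcomp Require Import all_fingroup all_solvable boolp.

(* In a finite group T, t lies in F(T) iff t ^+ #|T : K| lies in K for every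
   subgroup K; this is checked one prime at a time, F(T) being the product of
   the normal p-subgroups O_p(T).
   In an arbitrary group G, a subgroup H of finite index contains the kernel
   N of the action of G on its left cosets, and G/N is finite; H is then the
   preimage of a subgroup of G/N of the same index.  So both S(G) and the
   intersection of the F_N(G) are read off in the finite quotients G/N. *)

Set Implicit Arguments.
Unset Strict Implicit.
Unset Printing Implicit Defensive.

Local Open Scope group_scope.

Lemma pnat_leq_dvdn (p a b : nat) : p.-nat a -> p.-nat b -> a <= b -> a %| b.
Proof.
move=> pa pb; have [i ea] := p_natP pa; have [j eb] := p_natP pb.
rewrite ea eb; case: (leqP i j) => [ij _ | ji]; first exact: dvdn_exp2l.
move: pa; rewrite ea; case: p {ea eb pb} => [|[|p] _].
- by rewrite exp0n ?(leq_ltn_trans _ ji).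
- by rewrite !exp1n.
- by rewrite leq_exp2l // leqNgt ji.
Qed.

Section FiniteFitting.
Variable T : finGroupType.
Implicit Types (G K P : {group T}) (t y : T).

Lemma cycle_expg_index y K : y ^+ #|<[y]> : K| \in K.
Proof.
pose B := (<[y]> :&: K)%G.
have nBy : <[y]> \subset 'N(B).
  exact: sub_abelian_norm (cycle_abelian y) (subsetIl _ _).
have yN : y \in 'N(B) := subsetP nBy y (cycle_id y).
apply: (subsetP (subsetIr <[y]> K)); rewrite -indexgI.
apply: coset_idr; first exact: groupX.
rewrite morphX //= -card_quotient //; apply: expg_cardG.
exact: mem_quotient (cycle_id y).
Qed.

(* The index of <[y]> over K is a p-power bounded by the p-power #|K <*> P : K|,
   hence divides it. *)
Lemma normal_pgroup_expg_index (p : nat) G P K y :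
  p.-group P -> P <| G -> K \subset G -> y \in P -> y ^+ #|G : K| \in K.
Proof.
move=> pP /andP[sPG nPG] sKG yP.
have nPK : K \subset 'N(P) := subset_trans sKG nPG.
pose M := (K <*> P)%G.
have sPM : P \subset M := joing_subr K P.
have pMK : p.-nat #|M : K|.
  by rewrite /= norm_joinEl // indexMg (pnat_dvd (dvdn_indexg P K)).
have sYP : <[y]> \subset P by rewrite cycle_subG.
have pYK : p.-nat #|<[y]> : K|.
  exact: pnat_dvd (dvdn_indexg _ _) (pgroupS sYP pP).
have leYM : #|<[y]> : K| <= #|M : K|.
  exact/subset_leq_card/imsetS/(subset_trans sYP).
have dvdYG : #|<[y]> : K| %| #|G : K|.
  apply: dvdn_trans (pnat_leq_dvdn pYK pMK leYM) _.
  by apply: indexSg; [exact: joing_subl | rewrite join_subG sKG].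
by rewrite -(divnK dvdYG) mulnC expgM groupX // cycle_expg_index.
Qed.

Lemma Fitting_expg_index G K t :
  K \subset G -> t \in 'F(G) -> t ^+ #|G : K| \in K.
Proof.
move=> sKG tF; rewrite -(prod_constt (t ^+ _)); apply: group_prod => p _.
rewrite consttX.
apply: (normal_pgroup_expg_index (pcore_pgroup p G) (pcore_normal p G) sKG).
have hallF := nilpotent_pcore_Hall p (Fitting_nil G).
rewrite /= -p_core_Fitting (mem_normal_Hall hallF (pcore_normal _ _)).
  exact: p_elt_constt.
by apply: (subsetP _ _ (cycle_constt p t)); rewrite cycle_subG.
Qed.

(* The p-part of t raised to the p'-number #|G : M|, M a Sylow p-subgroup,
   lies in M, hence so does the p-part itself. *)
Lemma Fitting_of_expg_index G t :
  (forall K : {group T}, K \subset G -> t ^+ #|G : K| \in K) -> t \in 'F(G).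
Proof.
move=> tK; rewrite -(prod_constt t); apply: group_prod => p _.
apply: (subsetP (pcore_sub p 'F(G))); rewrite p_core_Fitting.
apply/bigcapP => M maxM; have sylM : p.-Sylow(G) M by rewrite -max_pgroup_Sylow.
set u := t.`_p.
have uM : u ^+ #|G : M| \in M.
  rewrite /u -consttX; apply: (subsetP _ _ (cycle_constt p _)).
  by rewrite cycle_subG tK // (pHall_sub sylM).
have co : coprime #|<[u]>| #|G : M|.
  by case/and3P: sylM => _ _; apply: pnat_coprime (p_elt_constt p t).
by rewrite -(expgK co (cycle_id u)) groupX.
Qed.

End FiniteFitting.

Section Subgroup.
Variables (G : groupType) (H : G -> Prop).
Hypothesis sH : is_subgroup H.

Lemma subgroup1 : H 1.
Proof. by case: sH. Qed.

Lemma subgroupM x y : H x -> H y -> H (x * y).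
Proof. by case: sH => _ HM _; apply: HM. Qed.

Lemma subgroupV x : H x -> H x^-1.
Proof. by case: sH => _ _ HV; apply: HV. Qed.

Lemma subgroup_trans x y z : H (x^-1 * y) -> H (y^-1 * z) -> H (x^-1 * z).
Proof. by move=> Hxy /(subgroupM Hxy); rewrite mulgA mulgK. Qed.

Lemma subgroup_sym x y : H (x^-1 * y) -> H (y^-1 * x).
Proof. by move/subgroupV; rewrite invMg invgK. Qed.

End Subgroup.

Section Generation.
Variable G : groupType.
Implicit Types (A K : G -> Prop) (x y : G).

Lemma gen_sub A y : A y -> gen A y.
Proof. by move=> Ay K _ /(_ y Ay). Qed.

Lemma gen_min A K : is_subgroup K -> (forall y, A y -> K y) ->
  forall x, gen A x -> K x.
Proof. by move=> sK sAK x /(_ K sK sAK). Qed.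

Lemma gen_subgroup A : is_subgroup (gen A).
Proof.
split=> [K [K1 _ _] // | x y Ax Ay K sK sAK | x Ax K sK sAK].
  exact: subgroupM (Ax K sK sAK) (Ay K sK sAK).
exact: subgroupV (Ax K sK sAK).
Qed.

Lemma lcs_subgroup K n : is_subgroup K -> is_subgroup (lcs K n).
Proof. by case: n => [|n] //= _; apply: gen_subgroup. Qed.

End Generation.

Section Homomorphism.
Variables (G Q : groupType) (f : G -> Q).
Hypothesis fM : is_hom f.

Lemma hom1 : f 1 = 1.
Proof. by apply: (@mulgI _ (f 1)); rewrite -fM !mulg1. Qed.

Lemma homV x : f x^-1 = (f x)^-1.
Proof. by apply: (@mulgI _ (f x)); rewrite -fM !mulgV hom1. Qed.

Lemma homX x n : f (x ^+ n) = f x ^+ n.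
Proof. by elim: n => [|n IHn]; rewrite ?hom1 // !expgS fM IHn. Qed.

Lemma homJ x y : f (x ^ y) = f x ^ f y.
Proof. by rewrite !conjgE !fM homV. Qed.

Lemma homR x y : f [~ x, y] = [~ f x, f y].
Proof. by rewrite !commgEl fM homV homJ. Qed.

Definition hom_image (H : G -> Prop) : Q -> Prop :=
  fun q => exists2 g, H g & f g = q.

Lemma hom_image_subgroup H : is_subgroup H -> is_subgroup (hom_image H).
Proof.
move=> sH; split=> [|_ _ [g Hg <-] [h Hh <-] | _ [g Hg <-]].
- by exists 1; [exact: subgroup1 | exact: hom1].
- by exists (g * h); [exact: subgroupM | exact: fM].
- by exists g^-1; [exact: subgroupV | exact: homV].
Qed.

Lemma hom_image_normal H : (forall q, exists g, f g = q) ->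
  is_normal H -> is_normal (hom_image H).
Proof.
move=> fS [sH nH]; split=> [|_ q [g Hg <-]]; first exact: hom_image_subgroup.
by have [h <-] := fS q; exists (g ^ h); [exact: nH | exact: homJ].
Qed.

Lemma lcs_hom_image H k q : lcs (hom_image H) k q -> hom_image (lcs H k) q.
Proof.
elim: k q => [|k IHk] q //=.
apply: gen_min; first exact/hom_image_subgroup/gen_subgroup.
move=> _ [_ [_ [/IHk [g Lg <-] [h Hh <-] ->]]].
by exists [~ g, h]; [apply: gen_sub; exists g, h | exact: homR].
Qed.

End Homomorphism.

Section Transversal.
Variables (G : groupType) (H : G -> Prop) (n : nat) (s : seq G).
Hypothesis cov : forall x, exists2 i, i < n & H ((nth 1 s i)^-1 * x).

Definition coset_index x : 'I_n := Ordinal (s2valP (cid2 (cov x))).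

Lemma coset_indexP x : H ((nth 1 s (coset_index x))^-1 * x).
Proof. exact: s2valP' (cid2 (cov x)). Qed.

Hypothesis sH : is_subgroup H.
Hypothesis dis :
  forall i j, i < n -> j < n -> H ((nth 1 s i)^-1 * nth 1 s j) -> i = j.

Lemma coset_index_eq x y : coset_index x = coset_index y <-> H (x^-1 * y).
Proof.
split=> [eq_xy | Hxy].
  apply: (subgroup_trans sH (subgroup_sym sH (coset_indexP x))).
  by rewrite eq_xy; apply: coset_indexP.
apply: ord_inj; apply: dis; rewrite ?ltn_ord //.
apply: (subgroup_trans sH (coset_indexP x)).
exact: (subgroup_trans sH Hxy (subgroup_sym sH (coset_indexP y))).
Qed.

Lemma coset_index_nth (i : 'I_n) : coset_index (nth 1 s i) = i.
Proof. by apply: ord_inj; apply: dis; rewrite ?ltn_ord //; apply: coset_indexP. Qed.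

End Transversal.

Lemma index_eq_leq (G : groupType) (H : G -> Prop) n m :
  is_subgroup H -> index_eq H n -> index_eq H m -> n <= m.
Proof.
move=> sH [s [_ _ dis]] [t [_ covt dist]].
have inj_s : injective (fun i : 'I_n => coset_index covt (nth 1 s i)).
  move=> i j /(coset_index_eq covt sH dist) Hij.
  exact: ord_inj (dis _ _ (ltn_ord i) (ltn_ord j) Hij).
by have := leq_card _ inj_s; rewrite !card_ord.
Qed.

Lemma index_eq_uniq (G : groupType) (H : G -> Prop) n m :
  is_subgroup H -> index_eq H n -> index_eq H m -> n = m.
Proof. by move=> sH iHn iHm; apply/eqP; rewrite eqn_leq !(index_eq_leq sH). Qed.

Lemma index_eq_ext (G : groupType) (A B : G -> Prop) n :
  (forall x, A x <-> B x) -> index_eq A n -> index_eq B n.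
Proof.
move=> eqAB [s [sz cov dis]]; exists s; split=> // [x | i j ltin ltjn /eqAB].
  by have [i ltin /eqAB] := cov x; exists i.
exact: dis.
Qed.

Section CosetAction.
Variables (G : groupType) (H : G -> Prop) (n : nat) (s : seq G).
Hypotheses (sH : is_subgroup H)
  (cov : forall x, exists2 i, i < n & H ((nth 1 s i)^-1 * x))
  (dis : forall i j, i < n -> j < n -> H ((nth 1 s i)^-1 * nth 1 s j) -> i = j).

Local Notation cidx := (coset_index cov).

Lemma coset_index_mul_inj g : injective (fun i : 'I_n => cidx (g * nth 1 s i)).
Proof.
move=> i j /(coset_index_eq cov sH dis); rewrite invMg -mulgA mulKg.
by move/(coset_index_eq cov sH dis); rewrite !(coset_index_nth cov dis).
Qed.

Definition coset_perm (g : G) : {perm 'I_n} := perm (@coset_index_mul_inj g^-1).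

Lemma coset_permE g i : coset_perm g i = cidx (g^-1 * nth 1 s i).
Proof. by rewrite permE. Qed.

Lemma coset_perm_hom : is_hom coset_perm.
Proof.
move=> g h; apply/permP => i; rewrite permM !coset_permE.
apply/(coset_index_eq cov sH dis)/(subgroup_sym sH).
have := coset_indexP cov (g^-1 * nth 1 s i).
by rewrite !invMg invgK !mulgA mulgK.
Qed.

Lemma coset_perm_ker g : coset_perm g = 1 -> H g.
Proof.
set k := cidx 1; move/permP/(_ k); rewrite perm1 coset_permE.
rewrite -{2}(coset_index_nth cov dis k) => /(coset_index_eq cov sH dis).
rewrite invMg invgK -mulgA => Hkg.
have Hk : H (nth 1 s k).
  by have := subgroupV sH (coset_indexP cov 1); rewrite mulg1 invgK.
have := subgroupM sH (subgroupM sH Hk Hkg) (subgroupV sH Hk).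
by rewrite !mulgA mulgV mul1g mulgK.
Qed.

Definition coset_perm_image : {set {perm 'I_n}} :=
  [set σ | `[< exists g, coset_perm g = σ >]].

Lemma mem_coset_perm_image g : coset_perm g \in coset_perm_image.
Proof. by rewrite inE; apply/asboolP; exists g. Qed.

Lemma coset_perm_image_group : group_set coset_perm_image.
Proof.
apply/group_setP; split=> [|σ τ].
  by rewrite inE; apply/asboolP; exists 1; apply: hom1 coset_perm_hom.
rewrite !inE => /asboolP[g <-] /asboolP[h <-].
by apply/asboolP; exists (g * h); rewrite coset_perm_hom.
Qed.

Canonical coset_perm_image_groupType := Group coset_perm_image_group.

Definition coset_proj g : subg_of coset_perm_image_groupType :=
  Subg (mem_coset_perm_image g).

End CosetAction.

(* A subgroup of finite index contains the kernel of the action on its left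
   cosets, whose image is a finite permutation group. *)
Lemma index_eq_finite_quotient (G : groupType) (H : G -> Prop) n :
  is_subgroup H -> index_eq H n ->
  exists (T : finGroupType) (p : G -> T),
    [/\ is_hom p, forall y, exists g, p g = y & forall g, p g = 1 -> H g].
Proof.
move=> sH [s [_ cov dis]]; exists _, (coset_proj sH cov dis); split.
- by move=> g h; apply: val_inj; rewrite /= coset_perm_hom.
- move=> y; have := valP y; rewrite inE => /asboolP[g eqy].
  by exists g; apply: val_inj.
- by move=> g /(congr1 val) /= /coset_perm_ker; apply.
Qed.

Section FiniteSubgroups.
Variable T : finGroupType.

Lemma group_subgroup (A : {group T}) : is_subgroup (fun t => t \in A).
Proof.
by split=> [|x y|x]; [exact: group1 | exact: groupM | rewrite groupV].
Qed.

Lemma subgroup_group_set (K : T -> Prop) :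
  is_subgroup K -> group_set [set t | `[< K t >]].
Proof.
move=> sK; apply/group_setP; split=> [|x y]; rewrite !inE.
  exact/asboolP/(subgroup1 sK).
by move=> /asboolP Kx /asboolP Ky; apply/asboolP/(subgroupM sK).
Qed.

Definition group_of_subgroup K (sK : is_subgroup K) : {group T} :=
  Group (subgroup_group_set sK).

Lemma mem_group_of_subgroup K (sK : is_subgroup K) t :
  (t \in group_of_subgroup sK) = `[< K t >].
Proof. by rewrite inE. Qed.

Lemma lcn_group_of_subgroup K (sK : is_subgroup K) k :
  'L_k.+1(group_of_subgroup sK) \subset group_of_subgroup (lcs_subgroup k sK).
Proof.
elim: k => [|k IHk]; first by apply/subsetP => z; rewrite lcn1.
rewrite lcnSn gen_subG; apply/subsetP => _ /imset2P[a b La Kb ->].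
rewrite mem_group_of_subgroup; apply/asboolP; apply: gen_sub.
exists a, b; split=> //.
  by have := subsetP IHk a La; rewrite mem_group_of_subgroup => /asboolP.
by move: Kb; rewrite mem_group_of_subgroup => /asboolP.
Qed.

Lemma Fitting_mem_Fitting (t : T) : Defs.Fitting t -> t \in 'F([set: T]).
Proof.
apply: (gen_min (group_subgroup 'F([set: T])%G)).
move=> y [K [[sK nK] [_ [c lcsK1]] Ky]].
suff sKF : group_of_subgroup sK \subset 'F([set: T]).
  by apply: (subsetP sKF); rewrite mem_group_of_subgroup; apply/asboolP.
apply: Fitting_max.
  rewrite /normal subsetT; apply/subsetP => g _; rewrite inE.
  apply/subsetP => z; rewrite mem_conjg !mem_group_of_subgroup.
  by move/asboolP/(nK _ g); rewrite conjgKV => /asboolP.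
apply/lcnP; exists c; apply/trivgP/subsetP => z.
move/(subsetP (lcn_group_of_subgroup sK c)).
by rewrite mem_group_of_subgroup => /asboolP/lcsK1 ->; apply: group1.
Qed.

End FiniteSubgroups.

Section FiniteQuotient.
Variables (G : groupType) (T : finGroupType) (p : G -> T).
Hypotheses (pM : is_hom p) (pS : forall t, exists g, p g = t).

Lemma preimg_subgroup (A : {group T}) : is_subgroup (fun g => p g \in A).
Proof.
split=> [|x y Ax Ay|x Ax]; first by rewrite (hom1 pM) group1.
  by rewrite pM groupM.
by rewrite (homV pM) groupV.
Qed.

Lemma preimg_normal (A : {group T}) :
  A <| [set: T] -> is_normal (fun g => p g \in A).
Proof.
move=> nA; split=> [|x g Ax]; first exact: preimg_subgroup.
by rewrite (homJ pM) memJ_norm // (subsetP (normal_norm nA)) ?inE.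
Qed.

Lemma lcs_preimg (A : {group T}) k g :
  lcs (fun g => p g \in A) k g -> p g \in 'L_k.+1(A).
Proof.
elim: k g => [|k IHk] g; first by rewrite lcn1.
apply: (gen_min (preimg_subgroup 'L_k.+2(A)%G)).
move=> _ [a [b [/IHk La Ab ->]]].
by rewrite (homR pM) /= lcnSn mem_commg.
Qed.

Let lift t : G := proj1_sig (cid (pS t)).

Let liftK t : p (lift t) = t.
Proof. exact: proj2_sig (cid (pS t)). Qed.

Lemma preimg_index (A : {group T}) :
  index_eq (fun g => p g \in A) #|[set: T] : A|.
Proof.
pose L := enum (lcosets A [set: T]).
have szL : size L = #|[set: T] : A| by rewrite -cardE card_lcosets.
have reprL C : C \in L -> repr C *: A = C.
  rewrite mem_enum => /lcosetsP[z _ ->]; apply/lcoset_eqP.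
  exact: mem_repr (lcoset_refl _ _).
exists [seq lift (repr C) | C <- L]; split=> [| x | i j ltiA ltjA].
- by rewrite size_map.
- have LxA : p x *: A \in L by rewrite mem_enum; apply/lcosetsP; exists (p x).
  exists (index (p x *: A) L); first by rewrite -szL index_mem.
  rewrite (nth_map set0) ?index_mem // nth_index // pM (homV pM) liftK.
  by rewrite -mem_lcoset reprL ?lcoset_refl.
rewrite -szL in ltiA ltjA; rewrite !(nth_map set0) // pM (homV pM) !liftK.
move=> Aij; apply/eqP; rewrite -(nth_uniq set0 ltiA ltjA (enum_uniq _)).
rewrite -(reprL _ (mem_nth _ ltiA)) -(reprL _ (mem_nth _ ltjA)); apply/eqP.
by apply/esym/lcoset_eqP; rewrite mem_lcoset.
Qed.

Lemma ker_normal : is_normal (fun g => p g = 1).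
Proof.
split=> [|x g px1]; last by rewrite (homJ pM) px1 conj1g.
split=> [|x y px1 py1|x px1]; first exact: hom1.
  by rewrite pM px1 py1 mulg1.
by rewrite (homV pM) px1 invg1.
Qed.

Lemma ker_finite_index : finite_index (fun g => p g = 1).
Proof.
exists #|[set: T] : 1%G|; apply: index_eq_ext (preimg_index 1%G) => g.
by rewrite inE; split=> /eqP.
Qed.

Lemma S_set_mem_Fitting x : S_set x -> p x \in 'F([set: T]).
Proof.
move=> Sx; apply: Fitting_of_expg_index => K _; rewrite -(homX pM).
exact: Sx (preimg_subgroup K) (preimg_index K).
Qed.

Lemma ker_sub_preimg (H : G -> Prop) :
  is_subgroup H -> (forall g, p g = 1 -> H g) ->
  exists K : {group T}, forall g, p g \in K <-> H g.
Proof.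
move=> sH kerH; pose sK := hom_image_subgroup pM sH.
exists (group_of_subgroup sK) => g; rewrite mem_group_of_subgroup.
split=> [/asboolP[h Hh eqgh] | Hg]; last by apply/asboolP; exists g.
have Hhg : H (h^-1 * g) by apply: kerH; rewrite pM (homV pM) eqgh mulVg.
by have := subgroupM sH Hh Hhg; rewrite mulKVg.
Qed.

Lemma Fitting_expg_index_ker_sub x (H : G -> Prop) m :
  p x \in 'F([set: T]) -> is_subgroup H -> (forall g, p g = 1 -> H g) ->
  index_eq H m -> H (x ^+ m).
Proof.
move=> Fx sH kerH iHm; have [K eqKH] := ker_sub_preimg sH kerH.
have -> : m = #|[set: T] : K|.
  exact: index_eq_uniq sH iHm (index_eq_ext eqKH (preimg_index K)).
by apply/eqKH; rewrite (homX pM) Fitting_expg_index ?subsetT.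
Qed.

(* The image in Q of the preimage of F(T) is nilpotent because its lower
   central series maps into that of F(T), which vanishes. *)
Lemma Fitting_hom_ker_sub (Q : groupType) (f : G -> Q) x :
  is_hom f -> (forall q, exists g, f g = q) -> (forall g, p g = 1 -> f g = 1) ->
  p x \in 'F([set: T]) -> Defs.Fitting (f x).
Proof.
move=> fM fS kerf Fx; pose F := 'F([set: T])%G.
apply: gen_sub; exists (hom_image f (fun g => p g \in F)); split.
- exact/(hom_image_normal fM fS)/preimg_normal/Fitting_normal.
- split; first exact/(hom_image_subgroup fM)/preimg_subgroup.
  have [c Lc1] := lcnP _ (Fitting_nil [set: T]); exists c.
  move=> q /(lcs_hom_image fM) [g /lcs_preimg + <-].
  by rewrite Lc1 inE => /eqP /kerf.
- by exists x.
Qed.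

End FiniteQuotient.

Theorem theorem1p5 (G : groupType) (x : G) :
  S_set x <->
  (forall N : G -> Prop, is_normal N -> finite_index N -> F_N N x).
Proof.
split=> [Sx N [sN _] [n iNn] Q f fM fS kerf | Fx H m sH iHm].
  have [T [p [pM pS kerp]]] := index_eq_finite_quotient sN iNn.
  apply: (Fitting_hom_ker_sub pM fM fS) (S_set_mem_Fitting pM pS Sx).
  by move=> g /kerp /kerf.
have [T [p [pM pS kerp]]] := index_eq_finite_quotient sH iHm.
apply: (Fitting_expg_index_ker_sub pM pS _ sH kerp iHm).
apply: Fitting_mem_Fitting.
exact: Fx (ker_normal pM) (ker_finite_index pM pS) T p pM pS
  (fun g => iff_refl _).
Qed.
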